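(* Let $\mathcal H$ be the set of pairs $(g,h)$ of Markov policies $g,h:\mathcal X\to\{0,1\}$ such that $N^{(g)}(x)\ge N^{(h)}(x)$ for all $x\in\mathcal X$. Each of the following conditions is sufficient for the RB to be indexable: (a) for every $(g,h)\in\mathcal H$ and every $x,z\in\mathcal X$, \[\sum_{y\in\mathcal X}\Big\{[\beta P_{zy}(1)-P_{xy}(1)]^+N^{(g)}(y)-[P_{xy}(1)-\beta P_{zy}(1)]^+N^{(h)}(y)\Big\}\le\frac{(1-\beta)^2}{\beta};\] (b) for every $(g,h)\in\mathcal H$ and every $x\in\mathcal X$, \[\sum_{y\in\mathcal X}\Big\{[P_{xy}(0)-P_{xy}(1)]^+N^{(g)}(y)-[P_{xy}(1)-P_{xy}(0)]^+N^{(h)}(y)\Big\}\le\frac{1-\beta}{\beta}.\]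
   Context: A restless bandit (RB) consists of a finite or countable state space $\mathcal X$, actions $\{0,1\}$ (0 = passive, 1 = active), transition matrices $P(0),P(1)$ on $\mathcal X$, and a cost function $c:\mathcal X\times\{0,1\}\to\mathbb R$; $\beta\in(0,1)$ is a discount factor. $[u]^+=\max\{u,0\}$. For $\lambda\in\mathbb R$ let $c_\lambda(x,a)=c(x,a)+\lambda a$. For a Markov policy $g:\mathcal X\to\{0,1\}$ (with $X_{t+1}$ drawn from $P_{X_t\,\cdot}(g(X_t))$) let $N^{(g)}(x)=(1-\beta)\mathbb E[\sum_{t\ge0}\beta^t g(X_t)\mid X_0=x]$. Let $V_\lambda$ be the unique fixed point of $V_\lambda(x)=\min\{H_\lambda(x,0),H_\lambda(x,1)\}$, $H_\lambda(x,a)=(1-\beta)c_\lambda(x,a)+\beta\sum_y P_{xy}(a)V_\lambda(y)$, and $g_\lambda(x)=0$ if $H_\lambda(x,0)<H_\lambda(x,1)$, $g_\lambda(x)=1$ otherwise. The passive set is $\Pi_\lambda=\{x: g_\lambda(x)=0\}$. The RB is indexable if $\lambda'\le\lambda''$ implies $\Pi_{\lambda'}\subseteq\Pi_{\lambda''}$. *)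

From HB Require Import structures.
From mathcomp Require Import all_boot all_order all_algebra.
From mathcomp Require Import all_classical all_reals all_analysis.
Set Implicit Arguments. Unset Strict Implicit. Unset Printing Implicit Defensive.
Import Order.TTheory GRing.Theory Num.Theory.
Local Open Scope ring_scope.

Section RB.
Variable R : realType.

Definition pos_part (u : R) : R := Num.max u 0.

(* Sum over a countable index type of a real function, defined as
   (sum of positive parts) - (sum of negative parts), each an unordered
   (extended) sum; it is the usual sum for absolutely summable families. *)
Definition ssum (T : choiceType) (f : T -> R) : R :=
  fine (\esum_(y in [set: T]) (pos_part (f y))%:E)
  - fine (\esum_(y in [set: T]) (pos_part (- f y))%:E).

Variable X : countType.

(* transition kernels P(0), P(1): P a x y = P_{xy}(a) *)
Definition stochastic (P : bool -> X -> X -> R) : Prop :=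
  forall a x, (forall y, 0 <= P a x y) /\ ssum (P a x) = 1.

(* t-step transition probabilities of the chain under Markov policy g :
   dist P g t x y = Pr(X_t = y | X_0 = x) *)
Fixpoint dist (P : bool -> X -> X -> R) (g : X -> bool) (t : nat) (x y : X) : R :=
  match t with
  | 0 => if y == x then 1 else 0
  | t'.+1 => ssum (fun z => dist P g t' x z * P (g z) z y)
  end.

Definition Nfreq (P : bool -> X -> X -> R) (beta : R) (g : X -> bool) (x : X) : R :=
  (1 - beta) * ssum (fun t : nat =>
     beta ^+ t * ssum (fun y => dist P g t x y * (g y)%:R)).

Definition Hq (P : bool -> X -> X -> R) (c : X -> bool -> R) (beta lam : R)
    (V : X -> R) (x : X) (a : bool) : R :=
  (1 - beta) * (c x a + lam * (a%:R)) + beta * ssum (fun y => P a x y * V y).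

Definition bellman_fp (P : bool -> X -> X -> R) (c : X -> bool -> R) (beta lam : R)
    (V : X -> R) : Prop :=
  (exists M : R, forall x, `|V x| <= M) /\
  forall x, V x = Num.min (Hq P c beta lam V x false) (Hq P c beta lam V x true).

(* passive set Pi_lambda = {x | g_lambda(x) = 0} = {x | H(x,0) < H(x,1)} *)
Definition passive (P : bool -> X -> X -> R) (c : X -> bool -> R) (beta lam : R)
    (V : X -> R) (x : X) : Prop :=
  Hq P c beta lam V x false < Hq P c beta lam V x true.

Definition indexable (P : bool -> X -> X -> R) (c : X -> bool -> R) (beta : R)
    (V : R -> X -> R) : Prop :=
  forall lam1 lam2 : R, lam1 <= lam2 ->
    forall x, passive P c beta lam1 (V lam1) x -> passive P c beta lam2 (V lam2) x.

Definition inH (P : bool -> X -> X -> R) (beta : R) (g h : X -> bool) : Prop :=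
  forall x, Nfreq P beta h x <= Nfreq P beta g x.

Definition cond_a (P : bool -> X -> X -> R) (beta : R) : Prop :=
  forall g h : X -> bool, inH P beta g h -> forall x z : X,
    ssum (fun y => pos_part (beta * P true z y - P true x y) * Nfreq P beta g y
                   - pos_part (P true x y - beta * P true z y) * Nfreq P beta h y)
    <= (1 - beta) ^+ 2 / beta.

Definition cond_b (P : bool -> X -> X -> R) (beta : R) : Prop :=
  forall g h : X -> bool, inH P beta g h -> forall x : X,
    ssum (fun y => pos_part (P false x y - P true x y) * Nfreq P beta g y
                   - pos_part (P true x y - P false x y) * Nfreq P beta h y)
    <= (1 - beta) / beta.

End RB.

(* Fix lam < mu, let D = V mu - V lam, and let g_lam be the optimal policy at lam.
   Comparing the Bellman equations at lam and mu with the policy-evaluation equation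
   N^g = (1 - beta) g + beta P_g N^g, and using that a bounded W with W <= beta P_h W is
   nonpositive (compare W with its supremum), gives the sandwich
   (mu - lam) N^(g_mu) <= D <= (mu - lam) N^(g_lam); in particular (g_lam, g_mu) is in H.
   Splitting the coefficients u_y of a sum sum_y u_y D(y) into positive and negative parts
   and applying the sandwich bounds that sum by (mu - lam) times the left-hand side of
   (a) or (b).  A state x passive at lam stays passive at mu as soon as
   D(x) <= (1 - beta) (mu - lam) + beta sum_y P_xy(1) D(y).  Under (b) this follows from
   D(x) <= beta sum_y P_xy(0) D(y).  Under (a), for every z either g_lam(z) = 0 and
   D(z) <= beta sup D, or g_lam(z) = 1 and, by (a),
   D(z) <= B := (1 - beta) (mu - lam) + sum_y P_xy(1) D(y) + (mu - lam) (1 - beta)^2 / beta;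
   hence sup D <= max(B, 0), and D(x) <= beta sup D <= beta B is the required bound. *)

From HB Require Import structures.
From mathcomp Require Import all_boot all_order all_algebra.
From mathcomp Require Import all_classical all_reals all_analysis.
From mathcomp Require Import lra ring.
Import Order.TTheory GRing.Theory Num.Theory.
Local Open Scope ring_scope.
Set Implicit Arguments. Unset Strict Implicit. Unset Printing Implicit Defensive.

Section PosPart.
Variable R : realType.
Implicit Types u v : R.

Lemma pos_partE u : pos_part u = if u < 0 then 0 else u.
Proof. by rewrite /pos_part /Order.max; case: ltgtP. Qed.

Lemma pos_part_ge0 u : 0 <= pos_part u.
Proof. by rewrite pos_partE; case: ltP. Qed.

Lemma pos_partBN u : pos_part u - pos_part (- u) = u.
Proof. by rewrite !pos_partE; case: ltP => h; case: ltP => h'; lra. Qed.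

Lemma ger0_pos_part u : 0 <= u -> pos_part u = u.
Proof. by rewrite pos_partE; case: ltP => h; lra. Qed.

Lemma ler0_pos_part u : u <= 0 -> pos_part u = 0.
Proof. by rewrite pos_partE; case: ltP => h; lra. Qed.

Lemma pos_part_le_norm u : pos_part u <= `|u|.
Proof. by rewrite pos_partE; case: ltP => // _; rewrite ler_norm. Qed.

Lemma mul_le_pos_part u d k n1 n2 : k * n2 <= d <= k * n1 ->
  u * d <= k * (pos_part u * n1 - pos_part (- u) * n2).
Proof.
move=> /andP[lo hi]; rewrite -{1}(pos_partBN u) mulrBl.
have := ler_wpM2l (pos_part_ge0 u) hi; have := ler_wpM2l (pos_part_ge0 (- u)) lo.
lra.
Qed.

End PosPart.

#[local] Hint Resolve pos_part_ge0 : core.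
#[local] Hint Extern 0 (forall _, 0 <= pos_part _) => move=> ?; exact: pos_part_ge0 : core.

Definition bounded_fn (R : realType) (T : Type) (u : T -> R) :=
  exists K, forall z, `|u z| <= K.

Lemma bounded_fnB (R : realType) (T : Type) (u v : T -> R) k :
  bounded_fn u -> bounded_fn v -> bounded_fn (fun y => u y - k * v y).
Proof.
move=> [K uK] [L vL]; exists (K + `|k| * L) => y.
by rewrite (le_trans (ler_normB _ _)) // lerD // normrM ler_wpM2l.
Qed.

Section Series.
Variables (R : realType) (T : choiceType).
Implicit Types (f g : T -> R) (k : R).

Definition esumR f : \bar R := (\esum_(y in [set: T]) (f y)%:E)%E.

Definition abs_summable f : Prop := (esumR (fun y => `|f y|%R) < +oo)%E.

Lemma esumR_ge0 f : (forall y, 0 <= f y) -> (0 <= esumR f)%E.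
Proof. by move=> f0; apply: esum_ge0 => y _; rewrite lee_fin. Qed.

Lemma le_esumR f g : (forall y, f y <= g y) -> (esumR f <= esumR g)%E.
Proof. by move=> fg; apply: le_esum => y _; rewrite lee_fin. Qed.

Lemma esumRD f g : (forall y, 0 <= f y) -> (forall y, 0 <= g y) ->
  esumR (fun y => f y + g y) = (esumR f + esumR g)%E.
Proof.
by move=> f0 g0; rewrite /esumR -esumD => [|y _|y _]; rewrite ?lee_fin.
Qed.

Lemma esumRZ k f : 0 <= k -> (forall y, 0 <= f y) ->
  esumR (fun y => k * f y) = (k%:E * esumR f)%E.
Proof.
move=> k0 f0; rewrite /esumR /esum -ereal_supZl //; last first.
  by apply/set0P; exists 0%E, set0 => //; rewrite fsbig_set0.
rewrite image_comp; congr ereal_sup; apply: eq_imagel => A _ /=.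
by rewrite ge0_mule_fsumr // => y; rewrite lee_fin.
Qed.

Lemma esumR_fineK f : (forall y, 0 <= f y) -> (esumR f < +oo)%E ->
  esumR f = (fine (esumR f))%:E.
Proof. by move=> f0 fin; rewrite fineK // ge0_fin_numE // esumR_ge0. Qed.

Lemma esumR_ge_point f y : (forall y, 0 <= f y) -> ((f y)%:E <= esumR f)%E.
Proof.
move=> f0; apply: esum_ge; exists [set y]%classic; first by split => //; exact: finite_set1.
by rewrite fsbig_set1.
Qed.

Lemma esumR_delta (x : T) k : 0 <= k -> esumR (fun y => if y == x then k else 0) = k%:E.
Proof.
move=> k0; rewrite /esumR (_ : (fun y => _) =
    (fun y => if y \in [set x]%classic then k%:E else 0%E)); last first.
  by apply/funext => y; rewrite classical_sets.in_set1; case: eqP.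
by rewrite -esum_mkcond esum_set1 // lee_fin.
Qed.

Lemma ge0_abs_summable f : (forall y, 0 <= f y) ->
  abs_summable f = (esumR f < +oo)%E.
Proof.
by move=> f0; rewrite /abs_summable (_ : (fun y => `|f y|) = f) //; apply/funext => y; rewrite ger0_norm.
Qed.

Lemma le_abs_summable f g k : (forall y, `|f y| <= k * `|g y|) ->
  abs_summable g -> abs_summable f.
Proof.
move=> fg gs; have k0 : 0 <= Num.max k 0 by rewrite le_max lexx orbT.
apply: le_lt_trans (le_esumR (g := fun y => Num.max k 0 * `|g y|) _) _.
  by move=> y; apply: le_trans (fg y) _; rewrite ler_wpM2r // le_max lexx.
by rewrite esumRZ // (esumR_fineK _ gs) // -EFinM ltry.
Qed.

Lemma abs_summableD f g : abs_summable f -> abs_summable g ->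
  abs_summable (fun y => f y + g y).
Proof.
move=> fs gs; apply: le_lt_trans (le_esumR (fun y => ler_normD (f y) (g y))) _.
by rewrite esumRD // lte_add_pinfty.
Qed.

Lemma abs_summableZ k f : abs_summable f -> abs_summable (fun y => k * f y).
Proof. by apply: (le_abs_summable (k := `|k|)) => y; rewrite normrM. Qed.

Lemma abs_summableM f g k : (forall y, `|g y| <= k) -> abs_summable f ->
  abs_summable (fun y => f y * g y).
Proof. by move=> gk; apply: (le_abs_summable (k := k)) => y; rewrite normrM mulrC ler_wpM2r. Qed.

Lemma abs_summable_delta (x : T) k : abs_summable (fun y => if y == x then k else 0).
Proof.
rewrite /abs_summable (_ : (fun y => _) = fun y => if y == x then `|k| else 0).
  by rewrite esumR_delta // ltry.
by apply/funext => y; case: eqP; rewrite ?normr0.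
Qed.

Lemma ssum_ge0E f : (forall y, 0 <= f y) -> ssum f = fine (esumR f).
Proof.
move=> f0; rewrite /ssum (_ : (fun y => (pos_part (f y))%:E) = fun y => (f y)%:E).
  rewrite (_ : (fun y => (pos_part (- f y))%:E) = fun=> 0%E); first by rewrite [X in _ - fine X]esum1 // subr0.
  by apply/funext => y; rewrite ler0_pos_part // oppr_le0.
by apply/funext => y; rewrite ger0_pos_part.
Qed.

Lemma ssum_ge0 f : (forall y, 0 <= f y) -> 0 <= ssum f.
Proof. by move=> f0; rewrite ssum_ge0E // fine_ge0 // esumR_ge0. Qed.

Lemma abs_summable_pos_part f :
  abs_summable f -> (esumR (fun y => pos_part (f y)) < +oo)%E.
Proof.
apply: le_lt_trans; apply: le_esumR => y; exact: pos_part_le_norm.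
Qed.

Lemma abs_summableN f : abs_summable f -> abs_summable (fun y => - f y).
Proof. by apply: (le_abs_summable (k := 1)) => y; rewrite normrN mul1r. Qed.

Lemma abs_summableB f g : abs_summable f -> abs_summable g ->
  abs_summable (fun y => f y - g y).
Proof. by move=> fs /abs_summableN; exact: abs_summableD. Qed.

Lemma abs_summable_pos f : abs_summable f -> abs_summable (fun y => pos_part (f y)).
Proof.
apply: (le_abs_summable (k := 1)) => y.
by rewrite mul1r ger0_norm ?pos_part_le_norm //; exact: pos_part_ge0.
Qed.

Lemma fine_esumRD f g : (forall y, 0 <= f y) -> (forall y, 0 <= g y) ->
  (esumR f < +oo)%E -> (esumR g < +oo)%E ->
  fine (esumR (fun y => f y + g y)) = fine (esumR f) + fine (esumR g).
Proof.
by move=> f0 g0 fs gs; rewrite esumRD // fineD // ge0_fin_numE ?esumR_ge0.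
Qed.

Lemma fine_esumRZ k f : 0 <= k -> (forall y, 0 <= f y) ->
  (esumR f < +oo)%E -> fine (esumR (fun y => k * f y)) = k * fine (esumR f).
Proof. by move=> k0 f0 fs; rewrite esumRZ // (esumR_fineK f0 fs). Qed.

Lemma ssum_diff f a b : (forall y, 0 <= a y) -> (forall y, 0 <= b y) ->
  (esumR a < +oo)%E -> (esumR b < +oo)%E -> (forall y, f y = a y - b y) ->
  ssum f = fine (esumR a) - fine (esumR b).
Proof.
move=> a0 b0 afin bfin fE.
have fp : abs_summable f.
  rewrite /abs_summable (_ : f = fun y => a y - b y); last exact/funext.
  apply: le_lt_trans (le_esumR (fun y => ler_normB (a y) (b y))) _.
  by under eq_fun do rewrite !ger0_norm //; rewrite esumRD // lte_add_pinfty.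
have fn := abs_summable_pos_part (abs_summableN fp).
have {}fp := abs_summable_pos_part fp.
have E : (fun y => pos_part (f y) + b y) = (fun y => pos_part (- f y) + a y).
  by apply/funext => y; have := pos_partBN (f y); rewrite fE; lra.
have := congr1 (fun h => fine (esumR h)) E.
rewrite /= (fine_esumRD _ b0) // (fine_esumRD _ a0) // => sumE.
rewrite /ssum -/(esumR _) -/(esumR _).
(* [lra] cannot cope with the extended-real hypotheses in the context. *)
by clear -sumE; lra.
Qed.

Lemma ssumD f g : abs_summable f -> abs_summable g ->
  ssum (fun y => f y + g y) = ssum f + ssum g.
Proof.
move=> fs gs; have pf := abs_summable_pos_part fs; have pg := abs_summable_pos_part gs.
have nf := abs_summable_pos_part (abs_summableN fs).
have ng := abs_summable_pos_part (abs_summableN gs).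
rewrite (ssum_diff (a := fun y => pos_part (f y) + pos_part (g y))
   (b := fun y => pos_part (- f y) + pos_part (- g y))).
- by rewrite (fine_esumRD (f := fun y => pos_part (f y))) //
    (fine_esumRD (f := fun y => pos_part (- f y))) // opprD addrACA.
- by move=> y; apply: addr_ge0; apply: pos_part_ge0.
- by move=> y; apply: addr_ge0; apply: pos_part_ge0.
- by rewrite esumRD ?lte_add_pinfty.
- by rewrite esumRD ?lte_add_pinfty.
- by move=> y; rewrite opprD addrACA !pos_partBN.
Qed.

Lemma ssumN f : ssum (fun y => - f y) = - ssum f.
Proof.
rewrite /ssum (_ : (fun y => (pos_part (- - f y))%:E) = fun y => (pos_part (f y))%:E) ?opprB //.
by apply/funext => y; rewrite opprK.
Qed.

Lemma ssumZ k f : abs_summable f -> ssum (fun y => k * f y) = k * ssum f.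
Proof.
wlog k0 : k f / 0 <= k => [hwlog fs|fs].
  have [k0|kn] := leP 0 k; first exact: hwlog.
  have -> : (fun y => k * f y) = fun y => - (- k * f y).
    by apply/funext => y; rewrite mulNr opprK.
  by rewrite ssumN hwlog ?oppr_ge0 ?(ltW kn) // mulNr opprK.
have pf := abs_summable_pos_part fs.
have nf := abs_summable_pos_part (abs_summableN fs).
rewrite (ssum_diff (a := fun y => k * pos_part (f y)) (b := fun y => k * pos_part (- f y))).
- by rewrite (fine_esumRZ (f := fun y => pos_part (f y))) //
    (fine_esumRZ (f := fun y => pos_part (- f y))) // -mulrBr.
- by move=> y; apply: mulr_ge0 => //; apply: pos_part_ge0.
- by move=> y; apply: mulr_ge0 => //; apply: pos_part_ge0.
- by rewrite esumRZ // (esumR_fineK _ pf) // -EFinM ltry.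
- by rewrite esumRZ // (esumR_fineK _ nf) // -EFinM ltry.
- by move=> y; rewrite -mulrBr pos_partBN.
Qed.

Lemma ssumB f g : abs_summable f -> abs_summable g ->
  ssum (fun y => f y - g y) = ssum f - ssum g.
Proof. by move=> fs gs; rewrite ssumD ?ssumN //; exact: abs_summableN. Qed.

Lemma ler_ssum f g : abs_summable f -> abs_summable g -> (forall y, f y <= g y) ->
  ssum f <= ssum g.
Proof.
move=> fs gs fg; rewrite -subr_ge0 -ssumB //.
by apply: ssum_ge0 => y; rewrite subr_ge0.
Qed.

Lemma ssum_delta (x : T) k : ssum (fun y => if y == x then k else 0) = k.
Proof.
rewrite (_ : (fun y => _) = fun y => k * (if y == x then 1 else 0)).
  rewrite ssumZ; last exact: abs_summable_delta.
  by rewrite ssum_ge0E ?esumR_delta ?mulr1 // => y; case: eqP.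
by apply/funext => y; case: eqP; rewrite ?mulr1 ?mulr0.
Qed.

Lemma ssum_ge_point f y : (forall y, 0 <= f y) -> abs_summable f -> f y <= ssum f.
Proof.
move=> f0; rewrite ge0_abs_summable // => fs.
by rewrite ssum_ge0E // -lee_fin -esumR_fineK // esumR_ge_point.
Qed.

Lemma ssum_mulBl (p q u : T -> R) K : (forall y, `|u y| <= K) ->
  abs_summable p -> abs_summable q ->
  ssum (fun y => (p y - q y) * u y) = ssum (fun y => p y * u y) - ssum (fun y => q y * u y).
Proof.
move=> uK ps qs; rewrite -ssumB; try exact: abs_summableM uK _.
by apply: congr1; apply/funext => y; rewrite mulrBl.
Qed.

Lemma ssum_weighted_le (p u : T -> R) K M : (forall y, 0 <= p y) -> abs_summable p ->
  ssum p = 1 -> (forall y, `|u y| <= K) -> (forall y, u y <= M) ->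
  ssum (fun y => p y * u y) <= M.
Proof.
move=> p0 ps p1 uK uM; rewrite -[M]mulr1 -p1 -ssumZ //.
apply: ler_ssum => [||y]; [exact: abs_summableM uK ps | exact: abs_summableZ |].
by rewrite mulrC ler_wpM2r.
Qed.

Lemma abs_summable_ssum1 f : (forall y, 0 <= f y) -> ssum f = 1 -> abs_summable f.
Proof.
move=> f0; rewrite ge0_abs_summable // ssum_ge0E //.
(* [fine +oo = 0], so [ssum f = 1] rules out an infinite sum. *)
by case: (esumR f) => [r _| |] /= => [|/eqP|/eqP]; rewrite ?ltry // eq_sym oner_eq0.
Qed.

End Series.

Section Fubini.
Variable R : realType.

Lemma esum_swap (I J : choiceType) (a : I -> J -> \bar R) : (forall i j, 0 <= a i j)%E ->
  (\esum_(i in [set: I]) \esum_(j in [set: J]) a i j =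
   \esum_(j in [set: J]) \esum_(i in [set: I]) a i j)%E.
Proof.
move=> a0; rewrite esum_esum // [RHS]esum_esum //.
rewrite (reindex_esum ([set: I] `*`` (fun=> [set: J]))%classic
   ([set: J] `*`` (fun=> [set: I]))%classic (fun k : I * J => (k.2, k.1))) //.
split=> [k _ //|[i j] [i' j'] _ _ /= [-> ->] //|[j i] _]; by exists (i, j).
Qed.

Lemma ssum_swap (I J : choiceType) (a : I -> J -> R) :
  (forall i j, 0 <= a i j) -> (forall i, abs_summable (a i)) ->
  abs_summable (fun i => ssum (a i)) ->
  abs_summable (fun j => ssum (fun i => a i j)) /\
  ssum (fun i => ssum (a i)) = ssum (fun j => ssum (fun i => a i j)).
Proof.
move=> a0 ai_sum sum_sum.
have rows i : 0 <= ssum (a i) by apply: ssum_ge0.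
have cols j : 0 <= ssum (fun i => a i j) by apply: ssum_ge0.
have rowsE : esumR (fun i => ssum (a i)) =
    (\esum_(i in [set: I]) \esum_(j in [set: J]) (a i j)%:E)%E.
  apply: eq_esum => i _; rewrite ssum_ge0E // -esumR_fineK //.
  by rewrite -ge0_abs_summable.
rewrite ge0_abs_summable // in sum_sum.
have colsE : esumR (fun j => ssum (fun i => a i j)) = esumR (fun i => ssum (a i)).
  rewrite rowsE esum_swap => [|i j]; last by rewrite lee_fin.
  apply: eq_esum => j _; rewrite ssum_ge0E // -esumR_fineK //.
  apply: le_lt_trans sum_sum; rewrite rowsE esum_swap => [|i k]; last by rewrite lee_fin.
  apply: esum_ge; exists [set j]%classic; first by split => //; exact: finite_set1.
  by rewrite fsbig_set1.
split; first by rewrite ge0_abs_summable // colsE.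
by rewrite !ssum_ge0E // colsE.
Qed.

End Fubini.

Section NatSeries.
Variable R : realType.

Lemma abs_summable_geometric (b : R) : 0 <= b < 1 -> abs_summable (fun t : nat => b ^+ t).
Proof.
move=> /andP[b0 b1]; rewrite ge0_abs_summable => [|t]; last exact: exprn_ge0.
have b1' : 0 < 1 - b by rewrite subr_gt0.
have partial n : (\sum_(0 <= i < n) b ^+ i) * (1 - b) = 1 - b ^+ n.
  elim: n => [|n IH]; first by rewrite big_nil mul0r expr0 subrr.
  by rewrite big_nat_recr //= mulrDl IH exprS; ring.
rewrite /esumR -nneseries_esumT => [|n]; last by rewrite lee_fin exprn_ge0.
apply: (@le_lt_trans _ _ ((1 - b)^-1)%:E); last exact: ltry.
apply: lime_le; first by apply: is_cvg_nneseries => n _ _; rewrite lee_fin exprn_ge0.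
apply: nearW => n; rewrite sumEFin lee_fin.
rewrite -[X in X <= _](mulfK (lt0r_neq0 b1')) partial -[X in _ <= X]mul1r ler_pM2r ?invr_gt0 //.
by rewrite gerBl exprn_ge0.
Qed.

Lemma ssum_recl (f : nat -> R) : (forall t, 0 <= f t) -> abs_summable f ->
  ssum f = f 0%N + ssum (fun t => f t.+1).
Proof.
move=> f0; rewrite ge0_abs_summable // => fs.
have split_head : esumR f = ((f 0%N)%:E + esumR (fun t => f t.+1))%E.
  have f0E n : (0 <= (f n)%:E)%E by rewrite lee_fin.
  rewrite /esumR -!nneseries_esumT // nneseries_recl //; congr (_ + _)%E.
  rewrite -(nneseries_addn (f := fun k => (f k)%:E) 1) //.
  by apply: congr_lim; apply/funext => n; apply: eq_bigr => i _; rewrite addn1.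
have tail_fin : (esumR (fun t => f t.+1) < +oo)%E.
  by apply: le_lt_trans fs; rewrite split_head leeDr // lee_fin.
by rewrite !ssum_ge0E // split_head fineD //= ge0_fin_numE ?esumR_ge0.
Qed.

End NatSeries.

Section SupBound.
Variables (R : realType) (T : Type).

Lemma le_sup_range (W : T -> R) z : bounded_fn W -> W z <= sup (range W).
Proof.
case=> K WK; apply: ub_le_sup; last by exists z.
by exists K => _ [y _ <-]; apply: le_trans (ler_norm _) (WK y).
Qed.

Lemma sup_range_le_max (W : T -> R) (b B : R) (x0 : T) : b < 1 -> bounded_fn W ->
  (forall z, W z <= b * sup (range W) \/ W z <= B) -> sup (range W) <= Num.max B 0.
Proof.
move=> b1 Wb WbB; have ne : (range W !=set0)%classic by exists (W x0), x0.
rewrite le_max; have [bSB|BbS] := leP (b * sup (range W)) B.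
  apply/orP; left; apply: ge_sup => // _ [z _ <-].
  by case: (WbB z) => // /le_trans; apply.
have S_le : sup (range W) <= b * sup (range W).
  apply: ge_sup => // _ [z _ <-].
  by case: (WbB z) => // /le_trans; apply; exact: ltW.
by apply/orP; right; nra.
Qed.

End SupBound.

Section Chain.
Variables (R : realType) (X : countType) (P : bool -> X -> X -> R).
Hypothesis P_stoch : stochastic P.

Lemma P_ge0 a x y : 0 <= P a x y.
Proof. by case: (P_stoch a x) => ->. Qed.

Lemma P_sum1 a x : ssum (P a x) = 1.
Proof. by case: (P_stoch a x). Qed.

Lemma P_summable a x : abs_summable (P a x).
Proof. exact: abs_summable_ssum1 (P_ge0 a x) (P_sum1 a x). Qed.

Lemma P_le1 a x y : P a x y <= 1.
Proof. by rewrite -(P_sum1 a x) ssum_ge_point //; [exact: P_ge0 | exact: P_summable]. Qed.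

Lemma abs_summable_Pmul a x (u : X -> R) K : (forall y, `|u y| <= K) ->
  abs_summable (fun y => P a x y * u y).
Proof. by move=> uK; apply: abs_summableM uK (P_summable a x). Qed.

Lemma ssum_Pmul_le a x (u : X -> R) K M : (forall y, `|u y| <= K) ->
  (forall y, u y <= M) -> ssum (fun y => P a x y * u y) <= M.
Proof.
apply: ssum_weighted_le; [exact: P_ge0 | exact: P_summable | exact: P_sum1].
Qed.

Lemma ssum_Pmul_le_sup a x (W : X -> R) : bounded_fn W ->
  ssum (fun y => P a x y * W y) <= sup (range W).
Proof.
move=> Wb; have [K WK] := Wb.
by apply: (ssum_Pmul_le _ _ WK) => y; exact: le_sup_range.
Qed.

Lemma ssum_PmulB a x (u v : X -> R) k : bounded_fn u -> bounded_fn v ->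
  ssum (fun y => P a x y * (u y - k * v y)) =
  ssum (fun y => P a x y * u y) - k * ssum (fun y => P a x y * v y).
Proof.
move=> [K uK] [L vL]; have us := abs_summable_Pmul a x uK.
have vs := abs_summable_Pmul a x vL.
rewrite -ssumZ // -ssumB //; last exact: abs_summableZ.
by apply: congr1; apply/funext => y; rewrite mulrBr mulrCA.
Qed.

Section Policy.
Variable g : X -> bool.
Local Notation d := (dist P g).

Definition expect t x (u : X -> R) := ssum (fun y => d t x y * u y).

Definition step_expect (u : X -> R) w := ssum (fun y => P (g w) w y * u y).

Lemma dist_ge0 t x y : 0 <= d t x y.
Proof.
elim: t x y => [|t IH] x y /=; first by case: eqP.
by apply: ssum_ge0 => z; rewrite mulr_ge0 ?P_ge0.
Qed.

Lemma dist_stochastic t x : abs_summable (d t x) /\ ssum (d t x) = 1.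
Proof.
elim: t => [|t [dsum d1]].
  by split; [exact: abs_summable_delta | exact: ssum_delta].
have rowsE : (fun z => ssum (fun y => d t x z * P (g z) z y)) = d t x.
  by apply/funext => z; rewrite ssumZ ?P_sum1 ?mulr1 //; exact: P_summable.
have a0 z y : 0 <= d t x z * P (g z) z y by rewrite mulr_ge0 ?dist_ge0 ?P_ge0.
have rows z : abs_summable (fun y => d t x z * P (g z) z y).
  exact/abs_summableZ/P_summable.
have rows_sum : abs_summable (fun z => ssum (fun y => d t x z * P (g z) z y)).
  by rewrite rowsE.
by have [cols_sum <-] := ssum_swap a0 rows rows_sum; rewrite rowsE d1.
Qed.

Lemma expect0 x u : expect 0 x u = u x.
Proof.
rewrite /expect (_ : (fun y => _) = fun y => if y == x then u x else 0) ?ssum_delta //.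
by apply/funext => y /=; case: eqP => [->|]; rewrite ?mul1r ?mul0r.
Qed.

Section UnitInterval.
Variable u : X -> R.
Hypothesis u01 : forall y, 0 <= u y <= 1.

Let u_norm y : `|u y| <= 1.
Proof. by have /andP[u0 u1] := u01 y; rewrite ger0_norm. Qed.

Lemma expect_ge0 t x : 0 <= expect t x u.
Proof.
by apply: ssum_ge0 => y; have /andP[u0 _] := u01 y; rewrite mulr_ge0 ?dist_ge0.
Qed.

Lemma expect_le1 t x : expect t x u <= 1.
Proof.
have [ds d1] := dist_stochastic t x.
by apply: (ssum_weighted_le _ ds d1 u_norm) => y; [exact: dist_ge0 | case/andP: (u01 y)].
Qed.

Lemma step_expect_ge0 w : 0 <= step_expect u w.
Proof.
by apply: ssum_ge0 => y; have /andP[u0 _] := u01 y; rewrite mulr_ge0 ?P_ge0.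
Qed.

Lemma step_expect_le1 w : step_expect u w <= 1.
Proof. by apply: (ssum_Pmul_le _ _ u_norm) => y; case/andP: (u01 y). Qed.

Lemma expectS_last t x : expect t.+1 x u = expect t x (step_expect u).
Proof.
have colE : (fun y => d t.+1 x y * u y) =
    fun y => ssum (fun w => d t x w * (P (g w) w y * u y)).
  apply/funext => y; rewrite /= mulrC -ssumZ.
    by apply: congr1; apply/funext => w; rewrite mulrC -mulrA.
  apply: (abs_summableM (k := 1) _ (proj1 (dist_stochastic t x))) => w.
  by rewrite ger0_norm ?P_le1 ?P_ge0.
have rowE : (fun w => ssum (fun y => d t x w * (P (g w) w y * u y))) =
    fun w => d t x w * step_expect u w.
  by apply/funext => w; rewrite ssumZ //; exact: abs_summable_Pmul.
have a0 w y : 0 <= d t x w * (P (g w) w y * u y).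
  by have /andP[u0 _] := u01 y; rewrite !mulr_ge0 ?dist_ge0 ?P_ge0.
have rows w : abs_summable (fun y => d t x w * (P (g w) w y * u y)).
  exact/abs_summableZ/abs_summable_Pmul.
have rows_sum : abs_summable (fun w => ssum (fun y => d t x w * (P (g w) w y * u y))).
  rewrite rowE; apply: (abs_summableM (k := 1) _ (proj1 (dist_stochastic t x))) => w.
  by rewrite ger0_norm ?step_expect_ge0 ?step_expect_le1.
by rewrite /expect colE; have [_ <-] := ssum_swap a0 rows rows_sum; rewrite rowE.
Qed.

End UnitInterval.

(* [dist] is defined by conditioning on the last step; this is the first-step form. *)
Lemma expectS_first t x u : (forall y, 0 <= u y <= 1) ->
  expect t.+1 x u = ssum (fun z => P (g x) x z * expect t z u).
Proof.
elim: t u => [|t IH] u u01.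
  by rewrite expectS_last // expect0; under eq_fun => z do rewrite expect0.
rewrite expectS_last // IH => [|w]; last by rewrite step_expect_ge0 ?step_expect_le1.
by apply: congr1; apply/funext => z; rewrite expectS_last.
Qed.

Section Discounted.
Variable beta : R.
Hypothesis beta01 : 0 <= beta < 1.

Let gR y : R := (g y)%:R.

Let gR01 y : 0 <= gR y <= 1.
Proof. by rewrite /gR; case: (g y); rewrite /= ?lexx ?ler01. Qed.

Definition occupation x := ssum (fun t => beta ^+ t * expect t x gR).

Let geo_summable : abs_summable (fun t => beta ^+ t) := abs_summable_geometric beta01.

Let abs_summable_geoM (e : nat -> R) : (forall t, 0 <= e t <= 1) ->
  abs_summable (fun t => beta ^+ t * e t).
Proof.
move=> e01; apply: (abs_summableM (k := 1) _ geo_summable) => t.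
by have /andP[e0 e1] := e01 t; rewrite ger0_norm.
Qed.

Let expect01 t x : 0 <= expect t x gR <= 1.
Proof. by rewrite expect_ge0 ?expect_le1. Qed.

Lemma occupation_ge0 x : 0 <= occupation x.
Proof.
by apply: ssum_ge0 => t; rewrite mulr_ge0 ?exprn_ge0 ?expect_ge0 //; case/andP: beta01.
Qed.

Lemma occupation_le x : occupation x <= ssum (fun t => beta ^+ t).
Proof.
apply: ler_ssum => // [|t]; first exact: abs_summable_geoM.
by rewrite ler_piMr ?exprn_ge0 ?expect_le1 //; case/andP: beta01.
Qed.

Lemma occupation_rec x :
  occupation x = gR x + beta * ssum (fun z => P (g x) x z * occupation z).
Proof.
have /andP[b0 b1] := beta01.
have be01 t z : 0 <= beta ^+ t * expect t z gR <= 1.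
  have /andP[e0 e1] := expect01 t z.
  have bt0 := exprn_ge0 t b0; have bt1 := exprn_ile1 t b0 (ltW b1).
  by rewrite mulr_ge0 ?mulr_ile1.
have a0 t z : 0 <= P (g x) x z * (beta ^+ t * expect t z gR).
  by have /andP[u0 _] := be01 t z; rewrite mulr_ge0 ?P_ge0.
have rows t : abs_summable (fun z => P (g x) x z * (beta ^+ t * expect t z gR)).
  by apply: (abs_summable_Pmul _ _ (K := 1)) => z; have /andP[u0 u1] := be01 t z; rewrite ger0_norm.
have rowE t : ssum (fun z => P (g x) x z * (beta ^+ t * expect t z gR)) =
    beta ^+ t * expect t.+1 x gR.
  rewrite expectS_first // -ssumZ; last first.
    by apply: (abs_summable_Pmul _ _ (K := 1)) => z; have /andP[u0 u1] := expect01 t z; rewrite ger0_norm.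
  by apply: congr1; apply/funext => z; rewrite mulrCA.
have rows_sum : abs_summable (fun t =>
    ssum (fun z => P (g x) x z * (beta ^+ t * expect t z gR))).
  by rewrite (funext rowE); apply: abs_summable_geoM.
have [_ swapE] := ssum_swap a0 rows rows_sum.
rewrite /occupation ssum_recl; last exact: abs_summable_geoM.
  rewrite expr0 mul1r expect0; congr (_ + _).
  have -> : (fun t => beta ^+ t.+1 * expect t.+1 x gR) =
      fun t => beta * ssum (fun z => P (g x) x z * (beta ^+ t * expect t z gR)).
    by apply/funext => t; rewrite rowE exprS mulrA.
  rewrite ssumZ // swapE; congr (_ * _); apply: congr1; apply/funext => z.
  by rewrite ssumZ //; apply: abs_summable_geoM.
by move=> t; have /andP[] := be01 t x.
Qed.

Lemma NfreqE x : Nfreq P beta g x = (1 - beta) * occupation x.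
Proof. reflexivity. Qed.

Lemma Nfreq_ge0 x : 0 <= Nfreq P beta g x.
Proof.
rewrite NfreqE; apply: mulr_ge0; last exact: occupation_ge0.
by rewrite subr_ge0; case/andP: beta01 => _ /ltW.
Qed.

Lemma Nfreq_bounded : bounded_fn (Nfreq P beta g).
Proof.
exists ((1 - beta) * ssum (fun t => beta ^+ t)) => x.
have b1 : 0 <= 1 - beta by rewrite subr_ge0; case/andP: beta01 => _ /ltW.
by rewrite ger0_norm ?Nfreq_ge0 // NfreqE ler_wpM2l ?occupation_le.
Qed.

Lemma Nfreq_rec x : Nfreq P beta g x =
  (1 - beta) * (g x)%:R + beta * ssum (fun z => P (g x) x z * Nfreq P beta g z).
Proof.
have -> : ssum (fun z => P (g x) x z * Nfreq P beta g z) =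
    (1 - beta) * ssum (fun z => P (g x) x z * occupation z).
  rewrite -ssumZ; first by apply: congr1; apply/funext => z; rewrite NfreqE mulrCA.
  apply: (abs_summable_Pmul _ _ (K := ssum (fun t => beta ^+ t))) => z.
  by rewrite ger0_norm ?occupation_ge0 ?occupation_le.
by rewrite NfreqE occupation_rec /gR; ring.
Qed.

End Discounted.

End Policy.
End Chain.

Section Bellman.
Variables (R : realType) (X : countType).
Variables (P : bool -> X -> X -> R) (c : X -> bool -> R) (beta : R) (V : R -> X -> R).
Hypothesis beta01 : 0 < beta < 1.
Hypothesis P_stoch : stochastic P.
Hypothesis V_bellman : forall lam, bellman_fp P c beta lam (V lam).

Local Notation H lam := (Hq P c beta lam (V lam)).
Local Notation N := (Nfreq P beta).

Definition opt_policy lam x : bool := ~~ (H lam x false < H lam x true).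

Let beta0 : 0 <= beta. Proof. by case/andP: beta01 => /ltW. Qed.
Let beta1 : beta < 1. Proof. by case/andP: beta01. Qed.
Let beta01' : 0 <= beta < 1. Proof. by rewrite beta0 beta1. Qed.

Lemma V_bounded lam : bounded_fn (V lam).
Proof. by have [[M VM] _] := V_bellman lam; exists M. Qed.

Lemma V_le_H lam x a : V lam x <= H lam x a.
Proof.
have [_ ->] := V_bellman lam; rewrite /Num.min /Order.min.
by case: a; case: ltP => // /ltW.
Qed.

Lemma V_opt lam x : V lam x = H lam x (opt_policy lam x).
Proof. by have [_ ->] := V_bellman lam; rewrite /opt_policy /Num.min /Order.min; case: ltP. Qed.

Lemma H_shift lam mu x a : H mu x a = H lam x a + (1 - beta) * (mu - lam) * a%:R +
  beta * ssum (fun y => P a x y * (V mu y - V lam y)).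
Proof.
rewrite (_ : (fun y => _) = fun y => P a x y * (V mu y - 1 * V lam y)).
  by rewrite (ssum_PmulB P_stoch) ?mul1r /Hq; [ring | exact: V_bounded..].
by apply/funext => y; rewrite mul1r.
Qed.

Lemma value_gap_step lam mu z : V mu z - V lam z <=
  (1 - beta) * (mu - lam) * (opt_policy lam z)%:R +
  beta * ssum (fun y => P (opt_policy lam z) z y * (V mu y - V lam y)).
Proof.
rewrite (V_opt lam z); have := V_le_H mu z (opt_policy lam z).
by rewrite (H_shift lam); lra.
Qed.

Lemma subsolution_le0 (h : X -> bool) (W : X -> R) : bounded_fn W ->
  (forall x, W x <= beta * ssum (fun y => P (h x) x y * W y)) -> forall x, W x <= 0.
Proof.
move=> Wb Wstep x; apply: le_trans (le_sup_range x Wb) _.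
have : sup (range W) <= Num.max 0 0.
  apply: (sup_range_le_max x beta1 Wb) => z; left.
  by apply: le_trans (Wstep z) _; rewrite ler_wpM2l // ssum_Pmul_le_sup.
by rewrite maxxx.
Qed.

Lemma V_gap_bounded lam mu : bounded_fn (fun y => V mu y - V lam y).
Proof.
have [[K VK] [L VL]] := (V_bounded mu, V_bounded lam).
by exists (K + L) => y; rewrite (le_trans (ler_normB _ _)) // lerD.
Qed.

Lemma value_gap_le lam mu x : V mu x - V lam x <= (mu - lam) * N (opt_policy lam) x.
Proof.
set g := opt_policy lam; rewrite -subr_le0.
have NgB := Nfreq_bounded P_stoch g beta01'.
apply: (subsolution_le0 (h := g) (W := fun z => V mu z - V lam z - (mu - lam) * N g z)).
  exact: bounded_fnB (V_gap_bounded lam mu) NgB.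
move=> z; rewrite (ssum_PmulB P_stoch _ _ _ (V_gap_bounded lam mu) NgB).
have := value_gap_step lam mu z; rewrite -/g (Nfreq_rec P_stoch g beta01' z).
lra.
Qed.

Lemma value_gap_ge lam mu x : (mu - lam) * N (opt_policy mu) x <= V mu x - V lam x.
Proof. by have := value_gap_le mu lam x; lra. Qed.

Lemma value_gap_ge0 lam mu y : lam <= mu -> 0 <= V mu y - V lam y.
Proof.
move=> le_lam_mu; apply: le_trans (value_gap_ge lam mu y).
by rewrite mulr_ge0 ?subr_ge0 // (Nfreq_ge0 P_stoch _ beta01').
Qed.

Lemma opt_policy_inH lam mu : lam < mu -> inH P beta (opt_policy lam) (opt_policy mu).
Proof.
move=> lt_lam_mu x; have mu_lam : 0 < mu - lam by rewrite subr_gt0.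
rewrite -(ler_pM2l mu_lam).
exact: le_trans (value_gap_ge lam mu x) (value_gap_le lam mu x).
Qed.

Lemma ssum_value_gap_le lam mu (u : X -> R) : abs_summable u ->
  ssum (fun y => u y * (V mu y - V lam y)) <= (mu - lam) *
  ssum (fun y => pos_part (u y) * N (opt_policy lam) y - pos_part (- u y) * N (opt_policy mu) y).
Proof.
move=> us; have [K DK] := V_gap_bounded lam mu.
have [K1 N1] := Nfreq_bounded P_stoch (opt_policy lam) beta01'.
have [K2 N2] := Nfreq_bounded P_stoch (opt_policy mu) beta01'.
have Fs := abs_summableB (abs_summableM N1 (abs_summable_pos us))
  (abs_summableM N2 (abs_summable_pos (abs_summableN us))).
rewrite -ssumZ //; apply: ler_ssum => [||y].
- exact: abs_summableM DK us.
- exact: abs_summableZ.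
by apply: mul_le_pos_part; rewrite value_gap_ge value_gap_le.
Qed.

Lemma passive_of_value_gap lam mu x : passive P c beta lam (V lam) x ->
  V mu x - V lam x <=
    (1 - beta) * (mu - lam) + beta * ssum (fun y => P true x y * (V mu y - V lam y)) ->
  passive P c beta mu (V mu) x.
Proof.
rewrite /passive => pas_lam gap; rewrite ltNge; apply/negP => H10.
have Vmu : V mu x = H mu x true by rewrite V_opt /opt_policy ltNge H10.
have Vlam : V lam x = H lam x false by rewrite V_opt /opt_policy pas_lam.
by move: gap; rewrite Vmu Vlam (H_shift lam mu x true) /=; lra.
Qed.

Lemma cond_b_gap_bound lam mu x : lam < mu -> cond_b P beta ->
  ssum (fun y => P false x y * (V mu y - V lam y)) -
  ssum (fun y => P true x y * (V mu y - V lam y)) <= (mu - lam) * ((1 - beta) / beta).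
Proof.
move=> lt_lam_mu condb; have [K DK] := V_gap_bounded lam mu.
have Ps := P_summable P_stoch; rewrite -(ssum_mulBl DK) //.
apply: le_trans (ssum_value_gap_le _ _ (abs_summableB (Ps _ _) (Ps _ _))) _.
apply: ler_wpM2l; first by rewrite subr_ge0 ltW.
under eq_fun do rewrite opprB.
exact: condb (opt_policy_inH lt_lam_mu) x.
Qed.

Lemma cond_a_gap_bound lam mu x z : lam < mu -> cond_a P beta ->
  beta * ssum (fun y => P true z y * (V mu y - V lam y)) -
  ssum (fun y => P true x y * (V mu y - V lam y)) <= (mu - lam) * ((1 - beta) ^+ 2 / beta).
Proof.
move=> lt_lam_mu conda; have [K DK] := V_gap_bounded lam mu.
have Ps := P_summable P_stoch.
have bPs : abs_summable (fun y => beta * P true z y) by exact: abs_summableZ.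
rewrite -ssumZ; last exact: abs_summableM DK _.
rewrite (_ : (fun y => _) = fun y => beta * P true z y * (V mu y - V lam y)).
  rewrite -(ssum_mulBl DK) //.
  apply: le_trans (ssum_value_gap_le _ _ (abs_summableB bPs (Ps _ _))) _.
  apply: ler_wpM2l; first by rewrite subr_ge0 ltW.
  under eq_fun do rewrite opprB.
  exact: conda (opt_policy_inH lt_lam_mu) x z.
by apply/funext => y; rewrite mulrA.
Qed.

Lemma passive_gap_le lam mu x : passive P c beta lam (V lam) x ->
  V mu x - V lam x <= beta * ssum (fun y => P false x y * (V mu y - V lam y)).
Proof.
move=> pas; have := value_gap_step lam mu x.
by rewrite /opt_policy pas /= mulr0 add0r.
Qed.

Lemma passive_mono_b lam mu x : lam < mu -> cond_b P beta ->
  passive P c beta lam (V lam) x -> passive P c beta mu (V mu) x.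
Proof.
move=> lt_lam_mu condb pas; have gap := passive_gap_le mu pas.
have bound := ler_wpM2l beta0 (cond_b_gap_bound x lt_lam_mu condb).
apply: (passive_of_value_gap (mu := mu) pas).
have -> : (1 - beta) * (mu - lam) = beta * ((mu - lam) * ((1 - beta) / beta)).
  by field; rewrite lt0r_neq0 //; case/andP: beta01.
lra.
Qed.

Lemma passive_mono_a lam mu x : lam < mu -> cond_a P beta ->
  passive P c beta lam (V lam) x -> passive P c beta mu (V mu) x.
Proof.
move=> lt_lam_mu conda pas; apply: (passive_of_value_gap (mu := mu) pas).
have DB := V_gap_bounded lam mu.
set S := sup (range (fun y => V mu y - V lam y)).
set K := ssum (fun y => P true x y * (V mu y - V lam y)).
have K0 : 0 <= K.
  apply: ssum_ge0 => y; rewrite mulr_ge0 ?(P_ge0 P_stoch) //.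
  by rewrite value_gap_ge0 // ltW.
pose B := (1 - beta) * (mu - lam) + K + (mu - lam) * ((1 - beta) ^+ 2 / beta).
have step z : V mu z - V lam z <= beta * S \/ V mu z - V lam z <= B.
  have := value_gap_step lam mu z; case: (opt_policy lam z) => /= gap.
    by right; have := cond_a_gap_bound x z lt_lam_mu conda; rewrite -/K /B; lra.
  left; apply: le_trans gap _; rewrite mulr0 add0r ler_wpM2l //.
  exact: (ssum_Pmul_le_sup P_stoch).
have B0 : 0 <= B.
  have mu_lam : 0 <= mu - lam by rewrite subr_ge0 ltW.
  have : 0 <= (1 - beta) ^+ 2 / beta by rewrite divr_ge0 ?sqr_ge0.
  have : 0 <= (1 - beta) * (mu - lam) by rewrite mulr_ge0 // subr_ge0 ltW.
  rewrite /B; nra.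
have := sup_range_le_max x beta1 DB step; rewrite -/S (max_idPl B0) => S_le.
have Dx : V mu x - V lam x <= beta * S.
  apply: le_trans (passive_gap_le mu pas) _; rewrite ler_wpM2l //.
  exact: (ssum_Pmul_le_sup P_stoch).
have := ler_wpM2l beta0 S_le.
have -> : beta * B = (1 - beta) * (mu - lam) + beta * K.
  by rewrite /B; field; rewrite lt0r_neq0 //; case/andP: beta01.
lra.
Qed.

End Bellman.

Theorem theorem1 (R : realType) (X : countType)
    (P : bool -> X -> X -> R) (c : X -> bool -> R) (beta : R)
    (V : R -> X -> R) :
  0 < beta < 1 ->
  stochastic P ->
  (exists M : R, forall x a, `|c x a| <= M) ->
  (forall lam : R, bellman_fp P c beta lam (V lam)) ->
  cond_a P beta \/ cond_b P beta ->
  indexable P c beta V.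
Proof.
move=> beta01 P_stoch _ V_bellman conds lam mu le_lam_mu x pas.
have [<-|ne_lam_mu] := eqVneq lam mu; first exact: pas.
have lt_lam_mu : lam < mu by rewrite lt_neqAle ne_lam_mu.
case: conds => [conda|condb].
  exact: passive_mono_a beta01 P_stoch V_bellman _ _ _ lt_lam_mu conda pas.
exact: passive_mono_b beta01 P_stoch V_bellman _ _ _ lt_lam_mu condb pas.
Qed.
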